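(* Let $n$ be a positive integer and let $L_2(n)$ denote the number of $2\times n$ Latin rectangles. Then \[ L_2(n)=\sum_{s_{00}+s_{10}+s_{01}+s_{11}=n}(-1)^{s_{10}+s_{01}+2s_{11}}\frac{n!}{s_{00}!\,s_{10}!\,s_{01}!\,s_{11}!}\big[(s_{00}+s_{10})(s_{00}+s_{01})-s_{00}\big]^n, \] where the sum runs over all quadruples of nonnegative integers with sum $n$.
   Context: A $k\times n$ Latin rectangle is a $k\times n$ matrix with entries in $\{1,\dots,n\}$ such that no row and no column contains a repeated entry (so each row is a permutation of $\{1,\dots,n\}$). The convention $0^0=1$ is used. *)

From mathcomp Require Import all_boot all_order all_algebra.
Set Implicit Arguments. Unset Strict Implicit. Unset Printing Implicit Defensive.

Definition latin_rect (k n : nat) (A : {ffun 'I_k * 'I_n -> 'I_n}) : bool :=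
  [forall i : 'I_k, forall j1 : 'I_n, forall j2 : 'I_n,
      (A (i, j1) == A (i, j2)) ==> (j1 == j2)] &&
  [forall j : 'I_n, forall i1 : 'I_k, forall i2 : 'I_k,
      (A (i1, j) == A (i2, j)) ==> (i1 == i2)].

Definition L (k n : nat) : nat := #|[set A | @latin_rect k n A]|.

(* A 2 x n array is Latin iff both rows are injective and no column repeats an
   entry.  By inclusion-exclusion, [r injective] = sum_S (-1)^|S| [r avoids S]
   for an endomap r of a finite set; as the columns of the array are then
   chosen independently, L(2, n) = sum_(S, T) (-1)^(|S| + |T|) N(S, T)^n, where
   N(S, T) = |S^c| |T^c| - |S^c :&: T^c| counts the columns (x, y) with x \notin S,
   y \notin T and x <> y.  The summand only depends on the sizes s_ij of the
   four cells of the Venn diagram of S and T, and exactly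
   n! / (s00! s10! s01! s11!) pairs (S, T) have prescribed cell sizes. *)

From mathcomp Require Import all_boot all_order all_algebra.
From mathcomp Require Import zify ring.
Import GRing.Theory.
Local Open Scope ring_scope.

Lemma sumr_indicator (R : pzSemiRingType) (I : finType) (A : {pred I}) :
  \sum_i (i \in A)%:R = #|A|%:R :> R.
Proof. by rewrite -sumr_const [RHS]big_mkcond; apply: eq_bigr => i _; case: (i \in A). Qed.

Lemma prodr_indicator (R : comPzSemiRingType) (I : finType) (P Q : pred I) :
  \prod_(i | P i) (Q i)%:R = [forall i, P i ==> Q i]%:R :> R.
Proof.
have [/forallP PQ | /forallPn[i]] := boolP [forall i, P i ==> Q i].
  by rewrite big1 // => i /(implyP (PQ i)) ->.
by rewrite negb_imply => /andP[Pi nQi]; rewrite (bigD1 i) //= (negbTE nQi) mul0r.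
Qed.

Lemma prodr1B_subsets (R : comPzRingType) (I : finType) (a : I -> R) :
  \prod_i (1 - a i) = \sum_(S : {set I}) (-1) ^+ #|S| * \prod_(i in S) a i.
Proof.
under eq_bigr do rewrite addrC.
rewrite bigA_distr; apply: eq_bigr => S _.
by rewrite -big_mkcond /= -prodrN.
Qed.

Lemma injectiveb_codom (T : finType) (f : T -> T) :
  injectiveb f = [forall y, y \in codom f].
Proof.
apply/injectiveP/forallP => [injf y | ontof]; first exact: injF_onto.
move=> x y; apply: (image_injP _) => //.
apply/eqP/eq_card => z; rewrite in_setT.
by have /codomP[w ->] := ontof z; rewrite image_f ?in_setT.
Qed.

Lemma injectiveb_incl_excl (R : comPzRingType) (T : finType) (f : T -> T) :
  (injectiveb f)%:R = \sum_(S : {set T}) (-1) ^+ #|S| * \prod_x (f x \notin S)%:R :> R.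
Proof.
have negbR (b : bool) : b%:R = 1 - (~~ b)%:R :> R by case: b; rewrite ?subr0 ?subrr.
have -> : (injectiveb f)%:R = \prod_y (y \in codom f)%:R :> R.
  by rewrite injectiveb_codom (prodr_indicator _ _ xpredT).
under eq_bigr do rewrite negbR.
rewrite prodr1B_subsets; apply: eq_bigr => S _.
rewrite !prodr_indicator; congr (_ * _%:R); congr nat_of_bool.
apply/idP/idP => /forallP avoid; apply/forallP => x /=.
  by apply/negP => fxS; have := avoid (f x); rewrite fxS codom_f.
by apply/implyP => xS; apply/codomP => -[y fy]; have := avoid y; rewrite -fy xS.
Qed.

Lemma card_draws_split (I : finType) (S : {set I}) (d c : nat) :
  #|[set T : {set I} | (#|T :&: S| == d) && (#|T :&: ~: S| == c)]| =
  ('C(#|S|, d) * 'C(#|~: S|, c))%N.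
Proof.
rewrite -!cards_draws -cardsX.
pose parts T := (T :&: S, T :&: ~: S).
have parts_inj : injective parts.
  by move=> T1 T2 [e1 e2]; rewrite -(setID T1 S) -(setID T2 S) !setDE e1 e2.
rewrite -(card_imset _ parts_inj); apply: eq_card => -[X Y]; rewrite !inE /=.
apply/imsetP/andP => [[T] | [/andP[XS dX] /andP[YSc cY]]].
  by rewrite inE => /andP[dT cT] [-> ->]; rewrite !subsetIr dT cT.
have XS0 : X :&: ~: S = set0 by apply/disjoint_setI0; rewrite disjoints_subset setCK.
have YS0 : Y :&: S = set0 by apply/disjoint_setI0; rewrite disjoints_subset.
have [XY_S XY_Sc] : (X :|: Y) :&: S = X /\ (X :|: Y) :&: ~: S = Y.
  by rewrite !setIUl XS0 YS0 setU0 set0U (setIidPl XS) (setIidPl YSc).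
by exists (X :|: Y); rewrite /parts ?inE XY_S XY_Sc ?dX ?cY.
Qed.

Lemma multinomial4 (a b c d : nat) :
  ((a + b + c + d)`! %/ (a`! * b`! * c`! * d`!) =
   'C(a + b + c + d, b + d) * 'C(b + d, d) * 'C(a + c, c))%N.
Proof.
have binD m k : ('C(m + k, k) * (k`! * m`!) = (m + k)`!)%N.
  by rewrite -{2}(addnK k m) bin_fact // leq_addl.
have -> : (a + b + c + d = a + c + (b + d))%N by ring.
rewrite -(binD (a + c) (b + d)) -(binD b d) -(binD a c).
set C1 := 'C(_, b + d); set C2 := 'C(_, d); set C3 := 'C(_, c).
have -> : (C1 * (C2 * (d`! * b`!) * (C3 * (c`! * a`!))) =
           C1 * C2 * C3 * (a`! * b`! * c`! * d`!))%N by ring.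
by rewrite mulnK // !muln_gt0 !fact_gt0.
Qed.

Lemma partition_sum_nat3 (R : nmodType) (X : finType) (m : nat)
    (f : X -> nat * nat * nat) (G : nat * nat * nat -> R) :
  (forall x, [/\ (f x).1.1 <= m, (f x).1.2 <= m & (f x).2 <= m]%N) ->
  \sum_x G (f x) =
  \sum_(a < m.+1) \sum_(b < m.+1) \sum_(c < m.+1)
    G (a : nat, b : nat, c : nat) *+ #|[set x | f x == (a : nat, b : nat, c : nat)]|.
Proof.
move=> f_le.
pose o x : 'I_m.+1 * ('I_m.+1 * 'I_m.+1) :=
  (inord (f x).1.1, (inord (f x).1.2, inord (f x).2)).
under [RHS]eq_bigr do rewrite pair_bigA; rewrite pair_bigA (partition_big o xpredT) //=.
apply: eq_bigr => -[a [b c]] _ /=; set t := (a : nat, b : nat, c : nat).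
have o_fibre x : (o x == (a, (b, c))) = (f x == t).
  have [] := f_le x; rewrite /o /t; case: (f x) => -[a' b'] c' /= a'_le b'_le c'_le.
  by rewrite !xpair_eqE -!val_eqE /= !inordK // andbA.
rewrite (eq_big (fun x => x \in [set x | f x == t]) (fun=> G t)) ?sumr_const // => x.
  by rewrite inE o_fibre.
by rewrite o_fibre => /eqP ->.
Qed.

Lemma ord2P (i : 'I_2) : i = ord0 \/ i = ord_max.
Proof. by case: i => -[|[|//]] lti; [left | right]; apply: val_inj. Qed.

Lemma forall_ord2 (Q : pred 'I_2) : [forall i, Q i] = Q ord0 && Q ord_max.
Proof.
apply/forallP/andP => [Q2 | [Q0 Q1] i]; first by split.
by case: (ord2P i) => ->.
Qed.

Lemma injectivebE (T : finType) (U : eqType) (f : T -> U) :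
  injectiveb f = [forall x, forall y, (f x == f y) ==> (x == y)].
Proof.
apply/injectiveP/forallP => [injf x | injf x y /eqP fxy].
  by apply/forallP => y; apply/implyP => /eqP/injf ->.
by have /forallP/(_ y)/implyP/(_ fxy)/eqP := injf x.
Qed.

Lemma latin_rect2E n (A : {ffun 'I_2 * 'I_n -> 'I_n}) :
  latin_rect A = [&& injectiveb (fun j => A (ord0, j)),
                     injectiveb (fun j => A (ord_max, j))
                   & [forall j, A (ord0, j) != A (ord_max, j)]].
Proof.
rewrite /latin_rect forall_ord2 !injectivebE -andbA; congr [&& _, _ & _].
apply: eq_forallb => j; rewrite !forall_ord2 /= !eqxx /= (_ : ord_max == ord0 = false) //.
by rewrite !implybF andbT eq_sym andbb.
Qed.

Definition admissible {I : finType} (S T : {set I}) (x y : I) : bool :=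
  [&& x \notin S, y \notin T & x != y].

Lemma latin_rect2_incl_excl (R : comPzRingType) n (A : {ffun 'I_2 * 'I_n -> 'I_n}) :
  (latin_rect A)%:R =
  \sum_(S : {set 'I_n}) \sum_(T : {set 'I_n}) (-1) ^+ #|S| * (-1) ^+ #|T| *
    \prod_j (admissible S T (A (ord0, j)) (A (ord_max, j)))%:R :> R.
Proof.
rewrite latin_rect2E -!mulnb !natrM !injectiveb_incl_excl.
rewrite -(prodr_indicator _ _ xpredT (fun j => A (ord0, j) != A (ord_max, j))).
rewrite mulr_suml; apply: eq_bigr => S _.
rewrite mulr_suml mulr_sumr; apply: eq_bigr => T _.
have -> : \prod_j (admissible S T (A (ord0, j)) (A (ord_max, j)))%:R =
          \prod_j (A (ord0, j) \notin S)%:R * \prod_j (A (ord_max, j) \notin T)%:R *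
          \prod_j (A (ord0, j) != A (ord_max, j))%:R :> R.
  by rewrite -!big_split; apply: eq_bigr => j _; rewrite -!mulnb !natrM mulrA.
ring.
Qed.

Lemma sum_rect2_prod (R : comPzSemiRingType) (I J : finType) (P : J -> J -> R) :
  \sum_(A : {ffun 'I_2 * I -> J}) \prod_i P (A (ord0, i)) (A (ord_max, i)) =
  (\sum_x \sum_y P x y) ^+ #|I|.
Proof.
pose rect (g : {ffun I -> J * J}) : {ffun 'I_2 * I -> J} :=
  [ffun p => if p.1 == ord0 then (g p.2).1 else (g p.2).2].
pose cols (A : {ffun 'I_2 * I -> J}) := [ffun i => (A (ord0, i), A (ord_max, i))].
have rectK : cancel rect cols.
  by move=> g; apply/ffunP => i; rewrite !ffunE /=; case: (g i).
have colsK : cancel cols rect.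
  by move=> A; apply/ffunP => -[k i]; rewrite !ffunE /=; case: (ord2P k) => ->.
rewrite pair_bigA -prodr_const bigA_distr_bigA (reindex rect) /=; last first.
  by exists cols => A _.
by apply: eq_bigr => g _; apply: eq_bigr => i _; rewrite !ffunE.
Qed.

Lemma sum_admissible (R : pzRingType) (I : finType) (S T : {set I}) :
  \sum_x \sum_y (admissible S T x y)%:R =
  #|~: S|%:R * #|~: T|%:R - #|~: S :&: ~: T|%:R :> R.
Proof.
have negb_split (a b c : bool) : [&& a, b & ~~ c]%:R = a%:R * b%:R - [&& a, b & c]%:R :> R.
  by case: a b c => [] [] []; rewrite /= ?mul1r ?mul0r ?subr0 ?subrr.
have diag x : \sum_y [&& x \in ~: S, y \in ~: T & x == y]%:R = (x \in ~: S :&: ~: T)%:R :> R.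
  rewrite (bigD1 x) //= eqxx big1 ?addr0 => [|y y_neq_x]; first by rewrite !inE andbT.
  by rewrite eq_sym (negbTE y_neq_x) !andbF.
under eq_bigr do under eq_bigr do rewrite /admissible -!in_setC negb_split.
under eq_bigr do rewrite sumrB -mulr_sumr diag.
by rewrite sumrB -mulr_suml !sumr_indicator.
Qed.

Lemma L2_incl_excl (R : comPzRingType) n :
  (L 2 n)%:R = \sum_(S : {set 'I_n}) \sum_(T : {set 'I_n}) (-1) ^+ #|S| * (-1) ^+ #|T| *
                 (#|~: S|%:R * #|~: T|%:R - #|~: S :&: ~: T|%:R) ^+ n :> R.
Proof.
rewrite /L -sumr_indicator; under eq_bigr do rewrite inE latin_rect2_incl_excl.
rewrite exchange_big; apply: eq_bigr => S _; rewrite exchange_big; apply: eq_bigr => T _.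
by rewrite -mulr_sumr (sum_rect2_prod _ _ _ (fun x y => (admissible S T x y)%:R))
  sum_admissible card_ord.
Qed.

Lemma card_venn_cells {I : finType} (S T : {set I}) :
  [/\ #|S| = #|S :&: ~: T| + #|S :&: T|, #|T| = #|~: S :&: T| + #|S :&: T|,
      #|~: S| = #|~: S :&: ~: T| + #|~: S :&: T|,
      #|~: T| = #|~: S :&: ~: T| + #|S :&: ~: T|
    & #|I| = #|~: S :&: ~: T| + #|S :&: ~: T| + #|~: S :&: T| + #|S :&: T|]%N.
Proof.
have := cardsID T S; have := cardsID T (~: S).
have := cardsID S T; have := cardsID S (~: T).
rewrite !setDE [T :&: S]setIC [T :&: ~: S]setIC [~: T :&: S]setIC [~: T :&: ~: S]setIC.
have := cardsC S.
by move=> *; split; lia.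
Qed.

(* [venn S T] = (s00, s10, s01), where s_ij counts the points lying in S iff
   i = 1 and in T iff j = 1; s11 is determined by the other three. *)
Definition venn {I : finType} (S T : {set I}) : nat * nat * nat :=
  (#|~: S :&: ~: T|, #|S :&: ~: T|, #|~: S :&: T|).

Definition venn_weight (n : nat) (t : nat * nat * nat) : int :=
  let: (a, b, c) := t in
  if (a + b + c <= n)%N then
    (-1) ^+ (b + c + 2 * (n - (a + b + c)))%N * (((a + b) * (a + c))%:Z - a%:Z) ^+ n
  else 0.

Lemma venn_weightE n (S T : {set 'I_n}) :
  (-1) ^+ #|S| * (-1) ^+ #|T| * (#|~: S|%:R * #|~: T|%:R - #|~: S :&: ~: T|%:R) ^+ n
  = venn_weight n (venn S T).
Proof.
have [cardS cardT cardSc cardTc] := card_venn_cells S T; rewrite card_ord => cardI.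
rewrite /venn_weight /venn ifT; last by lia.
rewrite -exprD cardSc cardTc; congr (_ ^+ _ * (_ - _) ^+ _); first lia.
  by rewrite -natrM mulnC natz.
exact: natz.
Qed.

Lemma card_venn (I : finType) (a b c : nat) : (a + b + c <= #|I|)%N ->
  #|[set ST : {set I} * {set I} | venn ST.1 ST.2 == (a, b, c)]| =
  (#|I|`! %/ (a`! * b`! * c`! * (#|I| - (a + b + c))`!))%N.
Proof.
move=> abc_le; set d := (#|I| - (a + b + c))%N.
have cardI : #|I| = (a + b + c + d)%N by rewrite /d; lia.
have venn_fibre (S T : {set I}) : (venn S T == (a, b, c)) =
    (#|S| == b + d)%N && (#|T :&: S| == d) && (#|T :&: ~: S| == c).
  have [cS cT cSc cTc cI] := card_venn_cells S T.
  rewrite /venn [T :&: S]setIC [T :&: ~: S]setIC !xpair_eqE.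
  by apply/andP/andP => -[/andP[/eqP e1 /eqP e2] /eqP e3];
    (split; [apply/andP; split|]); apply/eqP; lia.
have card_fibre (S : {set I}) : #|[set T | venn S T == (a, b, c)]| =
    (if #|S| == b + d then 'C(b + d, d) * 'C(a + c, c) else 0)%N.
  have [cardS | neqS] := eqVneq #|S| (b + d)%N; last first.
    by apply: eq_card0 => T; rewrite !inE venn_fibre (negbTE neqS).
  have cardSc : #|~: S| = (a + c)%N by have := cardsC S; lia.
  rewrite -cardS -cardSc -card_draws_split; apply: eq_card => T.
  by rewrite !inE venn_fibre cardS eqxx.
transitivity (\sum_(S : {set I}) #|[set T | venn S T == (a, b, c)]|)%N.
  by under [RHS]eq_bigr do rewrite -sum1dep_card; rewrite pair_big_dep -sum1dep_card.
under eq_bigr do rewrite card_fibre.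
by rewrite -big_mkcond sum_nat_cond_const card_draws cardI multinomial4 mulnA.
Qed.

Theorem mainTheorem2 (n : nat) : (0 < n)%N ->
  (L 2 n)%:Z =
  \sum_(s00 < n.+1) \sum_(s10 < n.+1) \sum_(s01 < n.+1)
    if (s00 + s10 + s01 <= n)%N then
      let s11 := (n - (s00 + s10 + s01))%N in
      (-1) ^+ (s10 + s01 + 2 * s11)%N *
      ((n`! %/ (s00`! * s10`! * s01`! * s11`!))%N)%:Z *
      (((s00 + s10) * (s00 + s01))%:Z - s00%:Z) ^+ n
    else 0.
Proof.
(* The identity also holds for n = 0, where both sides are 1. *)
move=> _.
have card_le_n (A : {set 'I_n}) : (#|A| <= n)%N.
  by rewrite -[X in (_ <= X)%N](card_ord n) max_card.
rewrite -natz L2_incl_excl pair_bigA /=.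
under eq_bigr do rewrite venn_weightE.
rewrite (partition_sum_nat3 _ _ n (fun ST => venn ST.1 ST.2)) => [|ST]; last first.
  by split; apply: card_le_n.
apply: eq_bigr => a _; apply: eq_bigr => b _; apply: eq_bigr => c _ /=.
rewrite /venn_weight; case: ifP => abc_le; last by rewrite mul0rn.
by rewrite card_venn card_ord // -mulr_natr mulrAC natz.
Qed.
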